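(* If $2 \leq a < b$, then $I_{a,b} \leq a^{a+b-2}$.
   Context: $K_{a,b}$ is the complete bipartite graph with partite sets of sizes $a$ and $b$. $I_{a,b}$ denotes the number of isomorphism classes (as unlabeled graphs) of spanning trees of $K_{a,b}$. *)

From mathcomp Require Import all_boot all_fingroup.
Set Implicit Arguments. Unset Strict Implicit. Unset Printing Implicit Defensive.

Definition vert (a b : nat) : finType := ('I_a + 'I_b)%type.

(* A spanning subgraph of K_{a,b} is given by its edge set, a set of pairs
   (i, j) with i in the first part and j in the second part. *)
Definition adj (a b : nat) (T : {set 'I_a * 'I_b}) : rel (vert a b) :=
  fun u v => match u, v with
             | inl i, inr j => (i, j) \in T
             | inr j, inl i => (i, j) \in T
             | _, _ => false
             end.

Definition connected_sub (a b : nat) (T : {set 'I_a * 'I_b}) : bool :=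
  [forall u : vert a b, forall v : vert a b, connect (adj T) u v].

(* T is a spanning tree: connected and acyclic, where acyclicity is expressed
   as "every edge is a bridge" (deleting any edge disconnects its endpoints). *)
Definition spanning_tree (a b : nat) (T : {set 'I_a * 'I_b}) : bool :=
  connected_sub T &&
  [forall e in T, ~~ connect (adj (T :\ e)) (inl e.1 : vert a b) (inr e.2)].

(* Isomorphism as unlabeled graphs: a bijection of the vertex set (not
   required to respect the bipartition) carrying edges exactly onto edges. *)
Definition graph_iso (a b : nat) (T1 T2 : {set 'I_a * 'I_b}) : bool :=
  [exists s : {perm vert a b},
     [forall u : vert a b, forall v : vert a b, adj T1 u v == adj T2 (s u) (s v)]].

Definition spanning_trees (a b : nat) : {set {set 'I_a * 'I_b}} :=
  [set T | spanning_tree T].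

Definition I_ab (a b : nat) : nat :=
  #|[set [set T' in spanning_trees a b | graph_iso T T'] | T in spanning_trees a b]|.

From mathcomp Require Import all_boot all_fingroup.
Set Implicit Arguments. Unset Strict Implicit. Unset Printing Implicit Defensive.

(* Root a spanning tree T of K_{a,b} at a vertex of the first part and give
   every other vertex a parent, one step closer to the root.  The parent edges
   alone already connect all vertices, and every edge of T is a bridge, so T
   is exactly its set of parent edges: T is determined by the parents of the b
   vertices of the second part (a^b choices) and of the a-1 non-root vertices
   of the first part.  Relabelling the second part gives an isomorphic tree,
   and a suitable relabelling makes the parent of the i-th non-root vertex
   have label < i, which leaves (a-1)! <= a^(a-2) choices for the latter. *)

Section Parent.
Variables (V : finType) (e : rel V) (r : V).
Hypothesis r_connect : forall v, connect e r v.

Definition reachable_in n v :=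
  [exists p : n.-tuple V, path e r p && (last r p == v)].

Lemma reachable_in_exists v : exists n, reachable_in n v.
Proof.
have /connectP[p ep ->] := r_connect v.
by exists (size p); apply/existsP; exists (in_tuple p); rewrite /= ep eqxx.
Qed.

Definition depth v := ex_minn (reachable_in_exists v).

Lemma parent_exists v : v != r -> exists w, e w v && (depth w < depth v).
Proof.
rewrite {2}/depth; case: ex_minnP => n.
case/existsP=> -[p /= /eqP <-] /andP[ep /eqP <-] _.
case/lastP: p ep => [|p x]; first by rewrite eqxx.
rewrite rcons_path last_rcons size_rcons => /andP[ep ex] _.
exists (last r p); rewrite ex ltnS /depth; case: ex_minnP => m _ -> //.
by apply/existsP; exists (in_tuple p); rewrite /= ep eqxx.
Qed.

Definition parent v := odflt r [pick w | e w v && (depth w < depth v)].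

Lemma parent_spec v : v != r -> e (parent v) v && (depth (parent v) < depth v).
Proof.
move=> vr; rewrite /parent; case: pickP => [w -> //|noparent].
by have [w] := parent_exists vr; rewrite noparent.
Qed.

Lemma parent_connect (e' : rel V) :
  (forall v, v != r -> e' (parent v) v) -> forall v, connect e' r v.
Proof.
move=> e'_parent v; elim: {v}(depth v).+1 {-2}v (ltnSn (depth v)) => // n IHn v.
case: (eqVneq v r) => [-> _|vr lt_v]; first exact: connect0.
apply: connect_trans (connect1 (e'_parent v vr)); apply: IHn.
by case/andP: (parent_spec vr) => _ /leq_trans; apply.
Qed.

End Parent.

Lemma adj_sym a b (T : {set 'I_a * 'I_b}) : symmetric (adj T).
Proof. by case=> [i|j] [i'|j']. Qed.

(* [p] gives the parent of each vertex of the second part, [q] that of each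
   vertex of the first part other than the root [i0]; [q i0] is ignored. *)
Definition tree_of a b (i0 : 'I_a) (p : 'I_b -> 'I_a) (q : 'I_a -> 'I_b) :
    {set 'I_a * 'I_b} :=
  [set x | (p x.2 == x.1) || ((x.1 != i0) && (q x.1 == x.2))].

Section SpanningTree.
Variables (a b : nat) (T : {set 'I_a * 'I_b}) (i0 : 'I_a).
Hypothesis treeT : spanning_tree T.

Let root : vert a b := inl i0.

Lemma spanning_tree_connect v : connect (adj T) root v.
Proof. by case/andP: treeT => /forallP/(_ root)/forallP/(_ v). Qed.

Let up := parent spanning_tree_connect.

Lemma adj_up v : v != root -> adj T (up v) v.
Proof. by move/(parent_spec spanning_tree_connect)/andP=> []. Qed.

Lemma spanning_tree_edgeE i j :
  ((i, j) \in T) =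
  (up (inr j) == inl i) || ((i != i0) && (up (inl i) == inr j)).
Proof.
apply/idP/idP=> [ijT|]; last first.
  case/orP=> [/eqP up_j | /andP[ii0 /eqP up_i]].
    by have := adj_up (v := inr j) isT; rewrite up_j.
  have : inl i != root by apply: contra ii0 => /eqP[->].
  by move/adj_up; rewrite up_i.
apply/negPn/negP; rewrite negb_or negb_and negbK => /andP[up_j up_i].
case/andP: treeT => _ /forall_inP/(_ _ ijT); apply/negP/negPn.
have up_avoids_ij w : w != root -> adj (T :\ (i, j)) (up w) w.
  move=> wr; have := adj_up wr.
  case: w wr => [i'|j'] wr; case up_w: (up _) => [i2|j2] //= h;
    rewrite !inE h andbT; apply/eqP => -[e1 e2]; subst.
  - by move: up_i; rewrite up_w eqxx orbF => /eqP i_i0; rewrite i_i0 eqxx in wr.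
  - by rewrite up_w eqxx in up_j.
have root_connect := parent_connect up_avoids_ij.
apply: connect_trans (root_connect (inr j)).
by rewrite (sym_connect_sym (adj_sym _)).
Qed.

Lemma spanning_tree_of : 0 < b -> exists p q, T = tree_of i0 p q.
Proof.
move=> b_gt0; exists (fun j => if up (inr j) is inl i then i else i0).
exists (fun i => if up (inl i) is inr j then j else Ordinal b_gt0).
apply/setP=> -[i j]; rewrite inE spanning_tree_edgeE /=.
have := adj_up (v := inr j) isT; case: (up (inr j)) => [i' _|//]; congr orb.
case: eqVneq => //= ii0; have : inl i != root by apply: contra ii0 => /eqP[->].
by move/adj_up; case: (up (inl i)).
Qed.

End SpanningTree.

Definition sum_permr_fun (T1 T2 : finType) (s : {perm T2}) (u : T1 + T2) :
    T1 + T2 :=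
  if u is inr y then inr (s y) else u.

Lemma sum_permr_inj (T1 T2 : finType) (s : {perm T2}) :
  injective (@sum_permr_fun T1 T2 s).
Proof. by case=> [x|y] [x'|y'] //= [] => // /perm_inj ->. Qed.

Definition sum_permr (T1 T2 : finType) (s : {perm T2}) : {perm T1 + T2} :=
  perm (@sum_permr_inj T1 T2 s).

Lemma graph_iso_relabel a b (T : {set 'I_a * 'I_b}) (s : {perm 'I_b}) :
  graph_iso T [set x | (x.1, (s^-1)%g x.2) \in T].
Proof.
apply/existsP; exists (sum_permr 'I_a s); apply/forallP=> u; apply/forallP=> v.
by rewrite !permE; case: u => [i|j]; case: v => [i'|j'] //=; rewrite inE permK.
Qed.

Lemma graph_iso_sym a b (T1 T2 : {set 'I_a * 'I_b}) :
  graph_iso T1 T2 -> graph_iso T2 T1.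
Proof.
case/existsP=> s /forallP iso_s; apply/existsP; exists (s^-1)%g.
apply/forallP=> u; apply/forallP=> v.
by have /forallP/(_ ((s^-1)%g v)) := iso_s ((s^-1)%g u); rewrite !permKV eq_sym.
Qed.

Lemma graph_iso_trans a b (T1 T2 T3 : {set 'I_a * 'I_b}) :
  graph_iso T1 T2 -> graph_iso T2 T3 -> graph_iso T1 T3.
Proof.
case/existsP=> s /forallP iso_s; case/existsP=> t /forallP iso_t.
apply/existsP; exists (s * t)%g; apply/forallP=> u; apply/forallP=> v.
have /forallP/(_ v)/eqP -> := iso_s u.
by have /forallP/(_ (s v)) := iso_t (s u); rewrite !permM.
Qed.

(* [undup] keeps last occurrences, so [rev (undup (rev s))] keeps first ones. *)
Lemma index_undup_rev (T : eqType) (s : seq T) x :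
  index x (rev (undup (rev s))) <= index x s.
Proof.
elim/last_ind: s => [|s y IHs] //; rewrite rev_rcons /= -!cats1 index_cat.
have undup_le : size (rev (undup (rev s))) <= size s.
  by rewrite size_rev -(size_rev s) size_undup.
have mem_s : rev (undup (rev s)) =i s.
  by move=> z; rewrite mem_rev mem_undup mem_rev.
case: ifP => _; rewrite ?rev_cons -?cats1 ?index_cat ?mem_s;
  case: ifP => // x_s.
- by rewrite memNindex ?mem_s ?x_s // (leq_trans undup_le) ?leq_addr.
- by rewrite leq_add2r.
Qed.

Lemma exists_relabel_le m n (f : 'I_n -> 'I_m) :
  exists s : {perm 'I_m}, forall i, s (f i) <= i.
Proof.
(* Rank the labels by first occurrence in [f 0, f 1, ...], then the rest. *)
pose l := rev (undup (rev (map f (enum 'I_n) ++ enum 'I_m))).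
have l_enum : perm_eq l (enum 'I_m).
  apply: uniq_perm; rewrite ?rev_uniq ?undup_uniq ?enum_uniq // => j.
  by rewrite mem_rev mem_undup mem_rev mem_cat mem_enum orbT.
have mem_l j : j \in l by rewrite (perm_mem l_enum) mem_enum.
have index_lt j : index j l < m.
  by rewrite -[m in _ < m]size_enum_ord -(perm_size l_enum) index_mem.
have rank_inj : injective (fun j => Ordinal (index_lt j)).
  by move=> j k [] /index_inj; apply.
exists (perm rank_inj) => i; rewrite permE /=.
apply: leq_trans (index_undup_rev _ _) _; rewrite index_cat map_f ?mem_enum //.
have nth_fi : nth (f i) (map f (enum 'I_n)) i = f i.
  by rewrite (nth_map i) ?nth_ord_enum // size_enum_ord.
by rewrite -{1}nth_fi index_nth // size_map size_enum_ord.
Qed.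

Definition bounded_maps n m : {set {ffun 'I_n -> 'I_m}} :=
  [set q | q \in family (fun i : 'I_n => [pred j : 'I_m | j <= i.-1])].

Lemma card_bounded_maps n m : #|bounded_maps n.+1 m| <= n`!.
Proof.
rewrite cardsE card_family foldrE big_map big_enum /=.
apply: (@leq_trans (\prod_(i < n.+1) i.-1.+1)).
  apply: leq_prod => i _; rewrite -[i.-1.+1]card_ord.
  apply: (leq_card_in (fun j : 'I_m => inord j)) => j k j_le k_le.
  by move/(congr1 (@nat_of_ord _)); rewrite !inordK //; apply: val_inj.
by rewrite big_ord_recl mul1n fact_prod big_add1 big_mkord.
Qed.

Lemma fact_leq_exp_pred n : n`! <= n.+1 ^ n.-1.
Proof.
elim: n => [|[|n] IHn] //; rewrite factS expnS leq_mul //.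
by case: n IHn => [|n] IHn //; rewrite (leq_trans IHn) // leq_exp2r.
Qed.

Definition tree_codes A b :=
  setX [set: {ffun 'I_b -> 'I_A.+1}] (bounded_maps A.+1 b).

Lemma spanning_tree_iso_code A b (T : {set 'I_A.+1 * 'I_b}) :
    0 < b -> spanning_tree T ->
  exists2 c, c \in tree_codes A b & graph_iso T (tree_of ord0 c.1 c.2).
Proof.
move=> b_gt0 treeT; have [p [q ->]] := spanning_tree_of ord0 treeT b_gt0.
have [s s_le] := exists_relabel_le (fun k : 'I_A => q (lift ord0 k)).
exists ([ffun j => p ((s^-1)%g j)],
        [ffun i => if i == ord0 then Ordinal b_gt0 else s (q i)]).
  rewrite !inE; apply/familyP=> i; rewrite inE ffunE.
  by case: (unliftP ord0 i) => [k ->|->] //=; rewrite (negbTE (neq_lift _ _)).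
have -> : tree_of ord0 [ffun j => p ((s^-1)%g j)]
    [ffun i => if i == ord0 then Ordinal b_gt0 else s (q i)] =
  [set x | (x.1, (s^-1)%g x.2) \in tree_of ord0 p q].
  apply/setP=> -[i j]; rewrite !inE /= !ffunE; congr orb.
  by case: eqVneq => //= _; rewrite -{1}[j](permKV s) (inj_eq perm_inj).
exact: graph_iso_relabel.
Qed.

Definition iso_class a b (T : {set 'I_a * 'I_b}) : {set {set 'I_a * 'I_b}} :=
  [set T' in spanning_trees a b | graph_iso T T'].

Lemma iso_class_eq a b (T1 T2 : {set 'I_a * 'I_b}) :
  graph_iso T1 T2 -> iso_class T1 = iso_class T2.
Proof.
move=> iso12; apply/setP=> T; rewrite !inE; congr (_ && _).
by apply/idP/idP; apply: graph_iso_trans => //; apply: graph_iso_sym.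
Qed.

Lemma I_ab_leq_codes A b : 0 < b -> I_ab A.+1 b <= #|tree_codes A b|.
Proof.
move=> b_gt0.
change (#|@iso_class A.+1 b @: spanning_trees A.+1 b| <= #|tree_codes A b|).
pose code_class (c : {ffun 'I_b -> 'I_A.+1} * {ffun 'I_A.+1 -> 'I_b}) :=
  iso_class (tree_of ord0 c.1 c.2).
apply: (leq_trans _ (leq_imset_card code_class (tree_codes A b))).
apply/subset_leq_card/subsetP=> C /imsetP[T]; rewrite inE => treeT ->.
have [c code_c iso_Tc] := spanning_tree_iso_code b_gt0 treeT.
by apply/imsetP; exists c => //; apply: iso_class_eq.
Qed.

Theorem theorem2p6 (a b : nat) : 2 <= a -> a < b -> I_ab a b <= a ^ (a + b - 2).
Proof.
case: a => [|A] //; case: b => [|B] // A_gt0 _.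
apply: leq_trans (I_ab_leq_codes A (ltn0Sn B)) _.
rewrite cardsX cardsT card_ffun !card_ord.
apply: leq_trans (leq_mul (leqnn _) (card_bounded_maps A B.+1)) _.
apply: leq_trans (leq_mul (leqnn _) (fact_leq_exp_pred A)) _.
by rewrite -expnD addSn -addnS (prednK A_gt0) addSn addnS subn2 /= addnC.
Qed.
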